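(* Let $S\subset\mathbb{R}^d$ be a nonempty compact convex set with diameter $D:=\sup_{x,y\in S}\|x-y\|$, and let $f$ be differentiable on $S$ with $L$-Lipschitz gradient on $S$ (not necessarily convex). Let $G:=\sup_{x\in S}\|\nabla f(x)\|<\infty$, fix $C\ge\max\{LD^2,\,GD\}$ with $C>0$, and let $f^*:=\inf_{x\in S}f(x)$. Let $\delta\ge0$ and suppose that for every $x\in S$ a vector $g_\delta(x)\in\mathbb{R}^d$ is available with \[ \big|\langle \nabla f(x)-g_\delta(x),\,s-x\rangle\big|\le\delta\,\|\nabla f(x)\|\quad\text{for all } s\in S. \] Let $\mathcal G(x):=\max_{s\in S}\langle\nabla f(x),\,x-s\rangle$ and $\tilde{\mathcal G}(x):=\max_{s\in S}\langle g_\delta(x),\,x-s\rangle$. Given $x^0\in S$, define iterates for $k=0,1,2,\dots$ by choosing $s^k\in\arg\min_{s\in S}\langle g_\delta(x^k),\,s-x^k\rangle$, setting $\overline\alpha_k:=\big(\tilde{\mathcal G}(x^k)-\delta\|\nabla f(x^k)\|\big)_+/C$ with $(u)_+:=\max\{u,0\}$, and $x^{k+1}:=x^k+\overline\alpha_k(s^k-x^k)$. Suppose there exists $r>0$ such that $\mathrm{dist}(x^k,\partial S)\ge r$ for all $k$. Then $\mathcal G(x^k)\ge r\|\nabla f(x^k)\|$ for all $k$, and if additionally $\delta<r/2$, then for every $K\ge0$, \[ \min_{0\le k\le K}\mathcal G(x^k)\le\frac{1}{1-\frac{2\delta}{r}}\sqrt{\frac{2C\,(f(x^0)-f^* )}{K+1}}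 ; \] consequently $\min_{0\le k\le K}\mathcal G(x^k)=\mathcal O(1/\sqrt K)$ and $\liminf_{k\to\infty}\mathcal G(x^k)=0$.
   Context: $\|\cdot\|$ is the Euclidean norm, $\langle\cdot,\cdot\rangle$ the Euclidean inner product, $\partial S$ is the boundary of $S$ in $\mathbb{R}^d$ and $\mathrm{dist}$ the Euclidean distance. *)

From HB Require Import structures.
From mathcomp Require Import all_boot all_order all_algebra.
From mathcomp Require Import all_classical all_reals all_analysis.
Import Order.TTheory GRing.Theory Num.Theory.
Import numFieldNormedType.Exports.
Local Open Scope ring_scope.
Local Open Scope classical_set_scope.

Section Defs.
Context {R : realType} {d : nat}.
Implicit Types (u v x y : 'rV[R]_d) (S A : set 'rV[R]_d).

Definition dotv u v : R := \sum_(i < d) u 0 i * v 0 i.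
Definition enorm u : R := Num.sqrt (dotv u u).

Definition convexS S : Prop :=
  forall x y (t : R), S x -> S y -> 0 <= t <= 1 -> S (t *: x + (1 - t) *: y).

Definition boundary S : set 'rV[R]_d := closure S `\` S°.

Definition set_dist x A : R := inf [set enorm (x - y) | y in A].

Definition diam S : R := sup [set enorm (p.1 - p.2) | p in [set p | S p.1 /\ S p.2]].

(* Frank-Wolfe gap max_{s in S} <g, x - s> (a max, since S is compact) *)
Definition fw_gap S (g : 'rV[R]_d) x : R := sup [set dotv g (x - s) | s in S].
End Defs.

Definition min_upto {R : realType} (u : nat -> R) (K : nat) : R :=
  \big[Num.min/u 0%N]_(k < K.+1) u k.

From mathcomp Require Import all_boot all_order all_algebra.
From mathcomp Require Import all_classical all_reals all_analysis.
From mathcomp Require Import ring lra.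
Import Order.TTheory GRing.Theory Num.Theory.
Import numFieldNormedType.Exports.
Local Open Scope ring_scope.
Local Open Scope classical_set_scope.

(* If the ball of radius [r] around [x] lies in [S], moving from [x] against
   [grad f x] by any length below [r] stays in [S], so the Frank-Wolfe gap
   satisfies [G(x) >= r |grad f x|].  The oracle error changes the gap by at
   most [delta |grad f x|], hence the step numerator
   [a = (G~(x) - delta |grad f x|)_+] satisfies [a >= (1 - 2 delta / r) G(x)],
   while [a <= G D <= C] makes the step size [a / C] admissible.  The descent
   lemma for the [L]-smooth [f] together with [L D^2 <= C] gives
   [f(x^(k+1)) <= f(x^k) - a^2 / (2 C)], so [((1 - 2 delta / r) G(x^k))^2] is
   at most the decrease of [2 C (f(x^k) - inf_S f)].  Telescoping bounds [K + 1]
   times the squared minimum by [2 C (f(x^0) - inf_S f)], and the same bound on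
   every tail of the sequence forces [liminf G(x^k) = 0]. *)

Section InnerProduct.
Context {R : realType} {d : nat}.
Implicit Types (u v w : 'rV[R]_d).

Lemma dotvC u v : dotv u v = dotv v u.
Proof. by apply: eq_bigr => i _; rewrite mulrC. Qed.

Lemma dotvDl u v w : dotv (u + v) w = dotv u w + dotv v w.
Proof. by rewrite /dotv -big_split; apply: eq_bigr => i _; rewrite mxE mulrDl. Qed.

Lemma dotvZl a u v : dotv (a *: u) v = a * dotv u v.
Proof. by rewrite /dotv mulr_sumr; apply: eq_bigr => i _; rewrite mxE mulrA. Qed.

Lemma dotvNl u v : dotv (- u) v = - dotv u v.
Proof. by rewrite -scaleN1r dotvZl mulN1r. Qed.

Lemma dotvBl u v w : dotv (u - v) w = dotv u w - dotv v w.
Proof. by rewrite dotvDl dotvNl. Qed.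

Lemma dotvDr u v w : dotv w (u + v) = dotv w u + dotv w v.
Proof. by rewrite !(dotvC w) dotvDl. Qed.

Lemma dotvZr a u v : dotv v (a *: u) = a * dotv v u.
Proof. by rewrite !(dotvC v) dotvZl. Qed.

Lemma dotvNr u v : dotv v (- u) = - dotv v u.
Proof. by rewrite !(dotvC v) dotvNl. Qed.

Lemma dotvBr u v w : dotv w (u - v) = dotv w u - dotv w v.
Proof. by rewrite dotvDr dotvNr. Qed.

Lemma dotv0l u : dotv 0 u = 0.
Proof. by rewrite /dotv big1 // => i _; rewrite mxE mul0r. Qed.

Lemma dotv0r u : dotv u 0 = 0.
Proof. by rewrite dotvC dotv0l. Qed.

Lemma dotvv_ge0 u : 0 <= dotv u u.
Proof. by rewrite /dotv sumr_ge0 // => i _; rewrite -expr2 sqr_ge0. Qed.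

Lemma dotvv_eq0 u : dotv u u = 0 -> u = 0.
Proof.
move=> /eqP; rewrite /dotv psumr_eq0 => [/allP u0|i _]; last first.
  by rewrite -expr2 sqr_ge0.
apply/rowP => i; apply/eqP; rewrite mxE -sqrf_eq0 expr2.
exact: u0 (mem_index_enum _).
Qed.

Lemma enorm_ge0 u : 0 <= enorm u.
Proof. exact: sqrtr_ge0. Qed.

Lemma enorm_sqr u : enorm u ^+ 2 = dotv u u.
Proof. by rewrite sqr_sqrtr // dotvv_ge0. Qed.

Lemma enormZ a u : enorm (a *: u) = `|a| * enorm u.
Proof.
by rewrite /enorm dotvZl dotvZr mulrA -expr2 sqrtrM ?sqr_ge0 // sqrtr_sqr.
Qed.

Lemma enormN u : enorm (- u) = enorm u.
Proof. by rewrite -scaleN1r enormZ normrN1 mul1r. Qed.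

Lemma enorm0 : enorm (0 : 'rV[R]_d) = 0.
Proof. by rewrite /enorm dotv0l sqrtr0. Qed.

Lemma enorm_eq0 u : enorm u = 0 -> u = 0.
Proof. by move=> u0; apply: dotvv_eq0; rewrite -enorm_sqr u0 expr0n. Qed.

Lemma cauchy_schwarz u v : dotv u v <= enorm u * enorm v.
Proof.
have [u0|u0] := eqVneq (enorm u) 0.
  by rewrite (enorm_eq0 _ u0) dotv0l enorm0 mul0r.
have [v0|v0] := eqVneq (enorm v) 0.
  by rewrite (enorm_eq0 _ v0) dotv0r enorm0 mulr0.
set a := enorm u; set b := enorm v.
have a_gt0 : 0 < a by rewrite lt_def u0 enorm_ge0.
have b_gt0 : 0 < b by rewrite lt_def v0 enorm_ge0.
have := dotvv_ge0 (b *: u - a *: v).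
rewrite !(dotvBl, dotvBr, dotvZl, dotvZr) -!enorm_sqr -/a -/b (dotvC v u) => H.
have : a * b * dotv u v <= a * b * (a * b) by nra.
by rewrite ler_pM2l ?mulr_gt0.
Qed.

Lemma ler_enormD u v : enorm (u + v) <= enorm u + enorm v.
Proof.
rewrite -(ler_pXn2r (_ : 0 < 2)%N) ?nnegrE ?addr_ge0 ?enorm_ge0 //.
rewrite enorm_sqr dotvDl !dotvDr -!enorm_sqr (dotvC v u).
have := cauchy_schwarz u v; nra.
Qed.

End InnerProduct.

Section SupImage.
Context {R : realType} {T : Type}.
Implicit Types (A : set T) (h : T -> R).

Lemma le_sup_image A h B x :
  (forall y, A y -> h y <= B) -> A x -> h x <= sup [set h y | y in A].
Proof.
move=> hB Ax; apply: ub_le_sup; last by exists x.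
by exists B => _ [y Ay <-]; exact: hB.
Qed.

Lemma sup_image_le A h B :
  A !=set0 -> (forall y, A y -> h y <= B) -> sup [set h y | y in A] <= B.
Proof.
move=> [x Ax] hB; apply: ge_sup; first by exists (h x), x.
by move=> _ [y Ay <-]; exact: hB.
Qed.

Lemma inf_image_le A h B x :
  (forall y, A y -> B <= h y) -> A x -> inf [set h y | y in A] <= h x.
Proof.
move=> hB Ax; apply: ge_inf; last by exists x.
by exists B => _ [y Ay <-]; exact: hB.
Qed.

End SupImage.

Lemma continuous_compact_inf_le {R : realType} {V : normedModType R}
    (A : set V) (f : V -> R) x :
  compact A -> {within A, continuous f} -> A x -> inf [set f y | y in A] <= f x.
Proof.
move=> Acpt fc; have /compact_bounded[M [Mreal HM]] := continuous_compact fc Acpt.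
apply: (inf_image_le _ _ (- (`|M| + 1))) => y Ay.
have /HM/(_ (f y) (ex_intro2 _ _ y Ay erefl)) : M < `|M| + 1.
  by rewrite (le_lt_trans (real_ler_norm Mreal)) // ltrDl.
by rewrite /= ler_norml => /andP[].
Qed.

Lemma differentiable_within_continuous {R : realType} {V : normedModType R}
    (A : set V) (f : V -> R) :
  (forall x, A x -> differentiable f x) -> {within A, continuous f}.
Proof.
move=> fdiff; apply: continuous_in_subspaceT => x /[!inE] Ax.
exact/differentiable_continuous/fdiff.
Qed.

Section CompactBounded.
Context {R : realType} {d : nat}.
Implicit Types (u : 'rV[R]_d).

Lemma ler_entry_mx_norm u i : `|u 0 i| <= `|u|.
Proof.
rewrite [leRHS]/Num.norm /= mx_normrE; apply/bigmax_geP; right.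
by exists (ord0, i).
Qed.

Lemma enorm_le_mx_norm u : enorm u <= Num.sqrt d%:R * `|u|.
Proof.
rewrite -[`|u|]ger0_norm // -sqrtr_sqr -sqrtrM ?ler0n // ler_sqrt; last first.
  by rewrite mulr_ge0 ?sqr_ge0.
rewrite /dotv -[d in d%:R]card_ord -sumr_const mulr_suml.
apply: ler_sum => i _; rewrite mul1r -expr2 -real_normK ?num_real //.
by rewrite lerXn2r ?nnegrE // ler_entry_mx_norm.
Qed.

Lemma compact_enorm_bounded (A : set 'rV[R]_d) :
  compact A -> exists B, forall x, A x -> enorm x <= B.
Proof.
move=> /compact_bounded[M [Mreal HM]].
have /HM hM : M < `|M| + 1 by rewrite (le_lt_trans (real_ler_norm Mreal)) // ltrDl.
exists (Num.sqrt d%:R * (`|M| + 1)) => x Ax.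
by rewrite (le_trans (enorm_le_mx_norm x)) // ler_wpM2l // hM.
Qed.

End CompactBounded.

Section LineDerivative.
Context {R : realType}.

Lemma is_derive_line {d : nat} (f : 'rV[R]_d -> R) x v t :
  derivable f (x + t *: v) v ->
  is_derive t 1 (fun s : R => f (x + s *: v)) ('D_v f (x + t *: v)).
Proof.
have E : (fun h : R => h^-1 *: (((fun s : R => f (x + s *: v)) \o shift t) (h *: 1)
     - f (x + t *: v))) =
  (fun h : R => h^-1 *: ((f \o shift (x + t *: v)) (h *: v) - f (x + t *: v))).
  apply: funext => h /=; rewrite /shift; congr (_ *: (f _ - _)).
  by rewrite [h%:A]mulr1 scalerDl addrCA.
move=> df; split; first by rewrite /derivable E.
by rewrite /derive E.
Qed.

Lemma is_derive_mulr_cst (c s : R) : is_derive s 1 (fun t : R => t * c) c.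
Proof.
have := @is_deriveM R R id (cst c) s 1 1 0 (is_derive_id _ _) (is_derive_cst _ _ _).
by rewrite scaler0 add0r [c%:A]mulr1.
Qed.

Lemma is_derive_cst_sqr (c s : R) :
  is_derive s 1 (fun t : R => c * t ^+ 2) (c * (2 * s)).
Proof.
have := @is_deriveX R R id 2 s 1 1 (is_derive_id _ _).
move/(@is_deriveM R R (cst c) _ s 1 0 _ (is_derive_cst _ _ _)).
by rewrite scaler0 addr0 [_ *: 1]mulr1 expr1.
Qed.

End LineDerivative.

Lemma convexS_segment {R : realType} {d : nat} {S : set 'rV[R]_d} {x v t} :
  convexS S -> S x -> S (x + v) -> 0 <= t <= 1 -> S (x + t *: v).
Proof.
move=> Scvx Sx Sxv t01; have := Scvx _ _ _ Sxv Sx t01.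
by rewrite scalerDr scalerBl scale1r addrAC [t *: x + _]addrC subrK.
Qed.

Section Descent.
Context {R : realType} {d : nat}.
Variables (S : set 'rV[R]_d) (f : 'rV[R]_d -> R) (gradf : 'rV[R]_d -> 'rV[R]_d)
  (L : R).
Hypotheses (Scvx : convexS S)
  (df : forall x, S x -> differentiable f x /\ forall v, 'd f x v = dotv (gradf x) v)
  (gradf_lip : forall x y, S x -> S y ->
     enorm (gradf x - gradf y) <= L * enorm (x - y)).

Lemma is_derive_line_grad {x v s} : S (x + s *: v) ->
  is_derive s 1 (fun t : R => f (x + t *: v)) (dotv (gradf (x + s *: v)) v).
Proof.
move=> /df[fdiff dfE].
by rewrite -dfE -deriveE //; apply: is_derive_line; exact: diff_derivable.
Qed.

(* MVT applied to [f (x + s v) - s <grad f x, v> - L |v|^2 s^2 / 2], whose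
   derivative is nonpositive by the Lipschitz bound. *)
Lemma descent_lemma x v a : S x -> S (x + v) -> 0 <= a <= 1 ->
  f (x + a *: v) <= f x + a * dotv (gradf x) v + L * enorm v ^+ 2 / 2 * a ^+ 2.
Proof.
move=> Sx Sxv /andP[a_ge0 a_le1].
set c0 := dotv (gradf x) v; set k := L * enorm v ^+ 2 / 2.
pose psi s := f (x + s *: v) - s * c0 - k * s ^+ 2.
pose dpsi s := dotv (gradf (x + s *: v)) v - c0 - k * (2 * s).
have psi_deriv (s : R) : 0 <= s <= 1 -> is_derive s 1 psi (dpsi s).
  move=> s01; have := is_derive_line_grad (convexS_segment Scvx Sx Sxv s01).
  move/is_deriveB/(_ (is_derive_mulr_cst c0 s)).
  by move/is_deriveB/(_ (is_derive_cst_sqr k s)).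
have [->|a_neq0] := eqVneq a 0.
  by rewrite scale0r addr0 mul0r expr0n /= mulr0 !addr0.
have a_gt0 : 0 < a by rewrite lt_def a_neq0 a_ge0.
have psi_cont : {within `[0, a], continuous psi}.
  apply: derivable_within_continuous => s; rewrite in_itv /= => /andP[s0 s1].
  by case: (psi_deriv s); rewrite ?s0 ?(le_trans s1 a_le1).
have [c] : exists2 c, c \in `]0, a[%R & psi a - psi 0 = dpsi c * (a - 0).
  apply: MVT => // s; rewrite in_itv /= => /andP[s0 s1]; apply: psi_deriv.
  by rewrite !ltW // (lt_le_trans s1 a_le1).
rewrite in_itv /= => /andP[c_gt0 c_lta].
have Sc : S (x + c *: v).
  by apply: convexS_segment; rewrite // !ltW // (lt_le_trans c_lta a_le1).
have dpsi_le0 : dpsi c <= 0.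
  rewrite /dpsi /c0 -dotvBl.
  have := cauchy_schwarz (gradf (x + c *: v) - gradf x) v.
  have := gradf_lip _ _ Sc Sx.
  rewrite addrAC subrr add0r enormZ (ger0_norm (ltW c_gt0)).
  have := enorm_ge0 v; rewrite /k; nra.
rewrite /psi scale0r addr0 mul0r expr0n /= mulr0 !subr0 => E.
have : dpsi c * a <= 0 by rewrite mulr_le0_ge0 // ltW.
lra.
Qed.

End Descent.
Arguments descent_lemma {R d S f gradf L} Scvx df gradf_lip {x v a}.

Lemma nbhs_rV {R : realType} {d : nat} (z : 'rV[R]_d) (B : set 'rV[R]_d) :
  nbhs z B -> exists2 e : R, 0 < e & forall w, `|z - w| < e -> B w.
Proof.
move=> /nbhs_ballP[e e_gt0 zeB]; exists e => // w zw; apply: zeB.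
by rewrite -ball_normE.
Qed.

(* The witness of [segment_meets_boundary] is [T], the supremum of the [t] in
   [[0, 1]] such that [x + t v] lies in [S]. *)
Section SegmentBoundary.
Context {R : realType} {d : nat}.
Variables (S : set 'rV[R]_d) (x v : 'rV[R]_d).
Hypothesis Sx : S x.

Let A := [set t : R | 0 <= t <= 1 /\ S (x + t *: v)].
Let T := sup A.

Let A0 : A 0.
Proof. by split; [rewrite lexx ler01 | rewrite scale0r addr0]. Qed.

Let A_ub : has_ubound A.
Proof. by exists 1 => t [/andP[]]. Qed.

Let le_T t : A t -> t <= T.
Proof. by move=> At; apply: ub_le_sup. Qed.

Let T_ge0 : 0 <= T.
Proof. exact: le_T. Qed.

Let T_le1 : T <= 1.
Proof. by apply: ge_sup; [exists 0 | move=> t [/andP[]]]. Qed.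

Let near_T e t : 0 < e -> `|T - t| <= e / (`|v| + 1) ->
  `|x + T *: v - (x + t *: v)| < e.
Proof.
move=> e_gt0 Tt; have v1_gt0 : 0 < `|v| + 1 by rewrite ltr_pwDr.
rewrite opprD addrACA subrr add0r -scalerBl normrZ.
apply: (@le_lt_trans _ _ (e / (`|v| + 1) * `|v|)); first by rewrite ler_wpM2r.
by rewrite mulrAC ltr_pdivrMr // ltr_pM2l // ltrDl.
Qed.

Let closure_T : closure S (x + T *: v).
Proof.
move=> B /nbhs_rV[e e_gt0 TeB].
have eta_gt0 : 0 < e / (`|v| + 1) by rewrite divr_gt0 // ltr_pwDr.
have [t At Tt] := sup_adherent eta_gt0 (conj (ex_intro _ 0 A0) A_ub).
exists (x + t *: v); split; first by case: At.
apply/TeB/near_T; rewrite // ger0_norm ?subr_ge0 ?le_T //.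
by rewrite lerBlDl -lerBlDr ltW.
Qed.

Let not_interior_T : ~ S (x + v) -> ~ S° (x + T *: v).
Proof.
move=> nSxv /nbhs_rV[e e_gt0 TeS].
have [T1|T_neq1] := eqVneq T 1.
  by apply: nSxv; have := TeS (x + T *: v); rewrite T1 scale1r subrr normr0; apply.
have eta_gt0 : 0 < e / (`|v| + 1) by rewrite divr_gt0 // ltr_pwDr.
set t := Num.min 1 (T + e / (`|v| + 1)).
have T_lt_t : T < t by rewrite lt_min ltrDl eta_gt0 lt_neqAle T_neq1 T_le1.
suff /le_T : A t by rewrite leNgt T_lt_t.
split; first by rewrite (le_trans T_ge0 (ltW T_lt_t)) /t ge_min lexx.
apply/TeS/near_T; rewrite // distrC ger0_norm ?subr_ge0 ?(ltW T_lt_t) //.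
by rewrite lerBlDl /t ge_min addrC lexx orbT.
Qed.

Lemma segment_meets_boundary :
  ~ S (x + v) -> exists2 t, 0 <= t <= 1 & boundary S (x + t *: v).
Proof.
move=> nSxv; exists T; rewrite ?T_ge0 ?T_le1 //.
by split; [exact: closure_T | exact: not_interior_T].
Qed.

End SegmentBoundary.
Arguments segment_meets_boundary {R d S x v}.

Section DistBoundary.
Context {R : realType} {d : nat}.
Implicit Types (S : set 'rV[R]_d) (x y z : 'rV[R]_d).

Lemma set_dist_le {S} x {z} : S z -> set_dist x S <= enorm (x - z).
Proof. by apply: inf_image_le => w _; exact: enorm_ge0. Qed.

Lemma mem_of_lt_dist_boundary S x y :
  S x -> enorm (y - x) < set_dist x (boundary S) -> S y.
Proof.
move=> Sx yx_lt; apply: contrapT => nSy.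
have [|t /andP[t_ge0 t_le1] bt] := segment_meets_boundary (v := y - x) Sx.
  by rewrite addrC subrK.
have := set_dist_le x bt; rewrite opprD addrA subrr add0r enormN enormZ ger0_norm //.
have : t * enorm (y - x) <= enorm (y - x) by rewrite ler_piMl ?enorm_ge0.
lra.
Qed.

End DistBoundary.

Section FrankWolfeGap.
Context {R : realType} {d : nat}.
Variable S : set 'rV[R]_d.
Hypothesis Scpt : compact S.
Implicit Types (gr x y s : 'rV[R]_d).

Lemma enorm_le_diam x y : S x -> S y -> enorm (x - y) <= diam S.
Proof.
have [B SB] := compact_enorm_bounded _ Scpt => Sx Sy.
apply: (le_sup_image _ (fun p => enorm (p.1 - p.2)) (B + B) (x, y)) => //.
move=> [u w] [/= Su Sw]; apply: le_trans (ler_enormD _ _) _.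
by rewrite enormN lerD ?SB.
Qed.

Lemma le_fw_gap gr {x s} : S x -> S s -> dotv gr (x - s) <= fw_gap S gr x.
Proof.
move=> Sx Ss.
apply: (le_sup_image _ (fun s => dotv gr (x - s)) (enorm gr * diam S)) => // y Sy.
apply: le_trans (cauchy_schwarz _ _) _.
by rewrite ler_wpM2l ?enorm_ge0 ?enorm_le_diam.
Qed.

Lemma fw_gap_ge0 gr {x} : S x -> 0 <= fw_gap S gr x.
Proof. by move=> Sx; have := le_fw_gap gr Sx Sx; rewrite subrr dotv0r. Qed.

Lemma fw_gap_argmin gr x s : S x -> S s ->
  (forall s', S s' -> dotv gr (s - x) <= dotv gr (s' - x)) ->
  fw_gap S gr x = dotv gr (x - s).
Proof.
move=> Sx Ss s_min; apply/le_anti; rewrite le_fw_gap // andbT.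
apply: sup_image_le; first by exists s.
by move=> s' Ss'; rewrite -(opprB s) -(opprB s') !dotvNr lerN2 s_min.
Qed.

(* Moving from [x] against [gr] by any length below [r] stays in [S]. *)
Lemma fw_gap_ge_dist_boundary gr x r : S x ->
  r <= set_dist x (boundary S) -> r * enorm gr <= fw_gap S gr x.
Proof.
move=> Sx r_le; set n := enorm gr.
have [n0|n_neq0] := eqVneq n 0; first by rewrite n0 mulr0 fw_gap_ge0.
have n_gt0 : 0 < n by rewrite lt_def n_neq0 enorm_ge0.
apply/ler_addgt0Pr => e e_gt0; rewrite -lerBlDr; set z := r * n - e.
have z_lt : z < r * n by rewrite ltrBlDr ltrDl.
have [z_le0|z_gt0] := leP z 0; first exact: le_trans z_le0 (fw_gap_ge0 gr Sx).
set t := z / n.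
have t_lt_r : t < r by rewrite ltr_pdivrMr.
have Sy : S (x - (t / n) *: gr).
  apply: mem_of_lt_dist_boundary Sx _; apply: lt_le_trans r_le.
  by rewrite addrAC subrr add0r enormN enormZ ger0_norm ?divr_ge0 ?ltW // divfK.
have := le_fw_gap gr Sx Sy.
by rewrite opprB addrC subrK dotvZr -enorm_sqr -/n expr2 mulrA divfK // divfK.
Qed.

End FrankWolfeGap.
Arguments enorm_le_diam {R d S} Scpt {x y}.
Arguments le_fw_gap {R d S} Scpt gr {x s}.
Arguments fw_gap_ge0 {R d S} Scpt gr {x}.
Arguments fw_gap_argmin {R d S} Scpt gr {x s}.
Arguments fw_gap_ge_dist_boundary {R d S} Scpt gr {x r}.

Section Telescope.
Context {R : realType}.
Implicit Types (u phi : nat -> R).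

Lemma min_upto_le u K k : (k <= K)%N -> min_upto u K <= u k.
Proof.
by rewrite -ltnS => kK; exact: (bigmin_le _ (Ordinal kK) (fun i : 'I_K.+1 => u i)).
Qed.

Lemma min_upto_ge0 u K : (forall k, 0 <= u k) -> 0 <= min_upto u K.
Proof. by move=> u_ge0; apply: le_bigmin. Qed.

Lemma telescope_sqr_le u phi m mu n N : 0 <= mu ->
  (forall k, u k ^+ 2 <= phi k - phi k.+1) ->
  (forall i, (i <= N)%N -> mu <= u (n + i)%N) -> m <= phi (n + N.+1)%N ->
  N.+1%:R * mu ^+ 2 <= phi n - m.
Proof.
move=> mu_ge0 decr mu_le m_le.
apply: (@le_trans _ _ (phi n - phi (n + N.+1)%N)); last by rewrite lerD2l lerN2.
have -> : phi n - phi (n + N.+1)%N = \sum_(n <= k < n + N.+1) (phi k - phi k.+1).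
  rewrite -[LHS]opprB -telescope_sumr ?leq_addr // -sumrN.
  by apply: eq_bigr => k _; rewrite opprB.
have -> : N.+1%:R * mu ^+ 2 = \sum_(n <= k < n + N.+1) mu ^+ 2.
  by rewrite sumr_const_nat addKn mulr_natl.
apply: ler_sum_nat => k /andP[nk kN]; apply: le_trans (decr k).
have := mu_le (k - n)%N; rewrite subnKC // leq_subLR -ltnS -addnS => /(_ kN) mu_le_k.
by rewrite lerXn2r ?nnegrE // (le_trans mu_ge0).
Qed.

Lemma min_upto_rate {u phi c} K : 0 < c ->
  (forall k, 0 <= u k) -> (forall k, 0 <= phi k) ->
  (forall k, (c * u k) ^+ 2 <= phi k - phi k.+1) ->
  min_upto u K <= c^-1 * Num.sqrt (phi 0%N / K.+1%:R).
Proof.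
move=> c_gt0 u_ge0 phi_ge0 decr.
have cm_ge0 : 0 <= c * min_upto u K := mulr_ge0 (ltW c_gt0) (min_upto_ge0 u K u_ge0).
rewrite -(ler_pM2l c_gt0) mulrA mulfV ?gt_eqF // mul1r.
rewrite -[leLHS]ger0_norm // -sqrtr_sqr ler_sqrt ?divr_ge0 // ler_pdivlMr // mulrC.
rewrite -[phi 0%N]subr0.
apply: (telescope_sqr_le (fun k => c * u k) phi 0 _ 0 K) => // i iK.
by rewrite add0n; apply: ler_wpM2l; [exact: ltW | exact: min_upto_le].
Qed.

Lemma limn_einf_eq0 u : (forall k, 0 <= u k) ->
  (forall n e, 0 < e -> exists2 k, (n <= k)%N & u k <= e) ->
  limn_einf (fun k => (u k)%:E) = 0%E.
Proof.
move=> u_ge0 u_small; rewrite limn_einf_lim.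
suff -> : einfs (fun k => (u k)%:E) = fun=> 0%E by exact: lim_cst.
apply/funext => n /=; apply/le_anti/andP; split.
- apply/lee_addgt0Pr => e e_gt0; rewrite add0e; apply: ge_ereal_inf.
  have [k nk uk] := u_small n e e_gt0.
  by exists (u k)%:E; [exists k | rewrite lee_fin].
- by apply: le_ereal_inf_tmp => _ [k _ <-]; rewrite lee_fin.
Qed.

Lemma limn_einf_telescope {u phi c} : 0 < c ->
  (forall k, 0 <= u k) -> (forall k, 0 <= phi k) ->
  (forall k, (c * u k) ^+ 2 <= phi k - phi k.+1) ->
  limn_einf (fun k => (u k)%:E) = 0%E.
Proof.
move=> c_gt0 u_ge0 phi_ge0 decr; apply: limn_einf_eq0 => // n e e_gt0.
apply: contrapT => no_small.
have ce_gt0 : 0 < (c * e) ^+ 2 by rewrite exprn_gt0 ?mulr_gt0.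
have : (Num.truncn (phi n / (c * e) ^+ 2)).+1%:R * (c * e) ^+ 2 <= phi n - 0.
  apply: (telescope_sqr_le (fun k => c * u k)) => //.
    by rewrite mulr_ge0 ?ltW.
  move=> i _; apply: ler_wpM2l; first exact: ltW.
  rewrite leNgt; apply/negP => ui_lt.
  by apply: no_small; exists (n + i)%N; rewrite ?leq_addr ?ltW.
by rewrite subr0 -ler_pdivlMr // leNgt truncnS_gt.
Qed.

Lemma sqrt_div_succ_le (a : R) K : 0 <= a -> (0 < K)%N ->
  Num.sqrt (a / K.+1%:R) <= Num.sqrt a / Num.sqrt K%:R.
Proof.
move=> a_ge0 K_gt0; have sK_gt0 : 0 < Num.sqrt (K%:R : R) by rewrite sqrtr_gt0 ltr0n.
rewrite ler_pdivlMr // -sqrtrM ?divr_ge0 // ler_sqrt ?divr_ge0 //.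
by rewrite mulrAC ler_pdivrMr ?ltr0n // ler_wpM2l // ler_nat.
Qed.

End Telescope.

Section FrankWolfeStep.
Context {R : realType} {d : nat}.
Variables (S : set 'rV[R]_d) (f : 'rV[R]_d -> R) (gradf g : 'rV[R]_d -> 'rV[R]_d)
  (L C delta : R).
Hypotheses (S_neq0 : S !=set0) (Scpt : compact S) (Scvx : convexS S)
  (df : forall x, S x -> differentiable f x /\ forall v, 'd f x v = dotv (gradf x) v)
  (L_ge0 : 0 <= L)
  (gradf_lip : forall x y, S x -> S y ->
     enorm (gradf x - gradf y) <= L * enorm (x - y))
  (LC : L * diam S ^+ 2 <= C)
  (GC : sup [set enorm (gradf x) | x in S] * diam S <= C)
  (C_gt0 : 0 < C) (delta_ge0 : 0 <= delta)
  (g_err : forall x s, S x -> S s ->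
     `| dotv (gradf x - g x) (s - x) | <= delta * enorm (gradf x)).
Implicit Types (x s : 'rV[R]_d).

Definition lmo x s :=
  S s /\ forall s', S s' -> dotv (g x) (s - x) <= dotv (g x) (s' - x).

(* Numerator of the step size; by [fw_gap_inexact] it is a lower bound for the
   true gap [fw_gap S (gradf x) x]. *)
Definition gap_lb x := Num.max (fw_gap S (g x) x - delta * enorm (gradf x)) 0.

Lemma gap_lb_ge0 x : 0 <= gap_lb x.
Proof. by rewrite le_max lexx orbT. Qed.

Lemma gap_lb_sqr x :
  gap_lb x ^+ 2 = gap_lb x * (fw_gap S (g x) x - delta * enorm (gradf x)).
Proof.
rewrite /gap_lb expr2; set y := _ - _.
by have [y_ge0|y_lt0] := leP 0 y; rewrite ?mul0r.
Qed.

Lemma enorm_grad_le_sup {x} : S x ->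
  enorm (gradf x) <= sup [set enorm (gradf y) | y in S].
Proof.
have [x0 Sx0] := S_neq0 => Sx.
apply: (le_sup_image _ (fun y => enorm (gradf y)) (enorm (gradf x0) + L * diam S));
  last exact: Sx.
move=> y Sy.
have -> : gradf y = gradf x0 + (gradf y - gradf x0) by rewrite addrC subrK.
apply: le_trans (ler_enormD _ _) _; rewrite lerD2l.
apply: le_trans (gradf_lip _ _ Sy Sx0) _.
by rewrite ler_wpM2l // (enorm_le_diam Scpt).
Qed.

Lemma fw_gap_inexact {x} : S x ->
  fw_gap S (gradf x) x <= fw_gap S (g x) x + delta * enorm (gradf x).
Proof.
move=> Sx; apply: sup_image_le => // s Ss.
have -> : dotv (gradf x) (x - s) = dotv (g x) (x - s) + dotv (gradf x - g x) (x - s).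
  by rewrite dotvBl [RHS]addrC subrK.
apply: lerD; first exact: (le_fw_gap Scpt (g x) Sx Ss).
apply: le_trans (ler_norm _) _.
by rewrite -[x - s]opprB dotvNr normrN g_err.
Qed.

Lemma lmo_slope_le {x s} : S x -> lmo x s ->
  dotv (gradf x) (s - x) <= - fw_gap S (g x) x + delta * enorm (gradf x).
Proof.
move=> Sx [Ss s_min]; rewrite (fw_gap_argmin Scpt _ Sx Ss s_min) -dotvNr opprB.
have -> : dotv (gradf x) (s - x) = dotv (g x) (s - x) + dotv (gradf x - g x) (s - x).
  by rewrite dotvBl [RHS]addrC subrK.
by rewrite lerD2l (le_trans (ler_norm _)) ?g_err.
Qed.

Lemma gap_lb_le_C {x s} : S x -> lmo x s -> gap_lb x <= C.
Proof.
move=> Sx lmo_s; have [Ss _] := lmo_s.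
rewrite /gap_lb ge_max (ltW C_gt0) andbT.
apply: (@le_trans _ _ (dotv (gradf x) (x - s))).
  by have := lmo_slope_le Sx lmo_s; rewrite -(opprB s) dotvNr; lra.
apply: le_trans (cauchy_schwarz _ _) (le_trans _ GC).
apply: ler_pM; rewrite ?enorm_ge0 //; first exact: enorm_grad_le_sup.
exact: (enorm_le_diam Scpt Sx Ss).
Qed.

Lemma fw_step_ge0_le1 {x s} : S x -> lmo x s -> 0 <= gap_lb x / C <= 1.
Proof.
move=> Sx lmo_s; rewrite divr_ge0 ?gap_lb_ge0 ?(ltW C_gt0) //=.
by rewrite ler_pdivrMr // mul1r (gap_lb_le_C Sx lmo_s).
Qed.

Lemma fw_step_in {x s} : S x -> lmo x s -> S (x + (gap_lb x / C) *: (s - x)).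
Proof.
move=> Sx lmo_s; apply: (convexS_segment Scvx Sx) (fw_step_ge0_le1 Sx lmo_s).
by rewrite addrC subrK; case: lmo_s.
Qed.

Lemma fw_descent {x s} : S x -> lmo x s ->
  f (x + (gap_lb x / C) *: (s - x)) <= f x - gap_lb x ^+ 2 / (2 * C).
Proof.
move=> Sx lmo_s; have [Ss _] := lmo_s.
have Sxv : S (x + (s - x)) by rewrite addrC subrK.
have Lv_le : L * enorm (s - x) ^+ 2 <= C.
  have sx_le := enorm_le_diam Scpt Ss Sx; apply: le_trans LC.
  rewrite ler_wpM2l // lerXn2r ?nnegrE ?enorm_ge0 //.
  exact: le_trans (enorm_ge0 _) sx_le.
move: (descent_lemma Scvx df gradf_lip Sx Sxv (fw_step_ge0_le1 Sx lmo_s))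
  (lmo_slope_le Sx lmo_s) Lv_le (gap_lb_ge0 x) (gap_lb_sqr x).
set a := gap_lb x; set Gt := fw_gap S (g x) x; set n := enorm (gradf x).
set dt := dotv (gradf x) (s - x); set Lv := L * enorm (s - x) ^+ 2.
move=> descent slope {}Lv_le a_ge0 a_sqr.
have step_gain : a / C * dt <= - (a ^+ 2 / C).
  have -> : - (a ^+ 2 / C) = a / C * (- Gt + delta * n).
    by rewrite a_sqr; field; rewrite gt_eqF.
  by rewrite ler_wpM2l // divr_ge0 // ltW.
have step_cost : Lv / 2 * (a / C) ^+ 2 <= a ^+ 2 / C / 2.
  have -> : a ^+ 2 / C / 2 = C / 2 * (a / C) ^+ 2 by field; rewrite gt_eqF.
  by rewrite ler_wpM2r ?sqr_ge0 // ler_pM2r.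
have -> : a ^+ 2 / (2 * C) = a ^+ 2 / C / 2 by field; rewrite gt_eqF.
lra.
Qed.

(* [gap_lb x >= G - 2 delta |grad f x|] by [fw_gap_inexact], and
   [delta |grad f x| <= delta G / r] by the hypothesis on [r]. *)
Lemma gap_lb_ge {x r} : S x -> 0 < r ->
  r * enorm (gradf x) <= fw_gap S (gradf x) x ->
  (1 - 2 * delta / r) * fw_gap S (gradf x) x <= gap_lb x.
Proof.
move=> Sx r_gt0 r_le; rewrite /gap_lb le_max; apply/orP; left.
have := fw_gap_inexact Sx.
have : delta * enorm (gradf x) <= delta * fw_gap S (gradf x) x / r.
  by rewrite -mulrA ler_wpM2l // ler_pdivlMr // mulrC.
have -> : (1 - 2 * delta / r) * fw_gap S (gradf x) x =
    fw_gap S (gradf x) x - 2 * (delta * fw_gap S (gradf x) x / r).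
  by field; rewrite gt_eqF.
lra.
Qed.

Lemma fw_step_decrease {x s r} : S x -> lmo x s -> 0 < r ->
  0 <= 1 - 2 * delta / r -> r * enorm (gradf x) <= fw_gap S (gradf x) x ->
  ((1 - 2 * delta / r) * fw_gap S (gradf x) x) ^+ 2 <=
    2 * C * (f x - f (x + (gap_lb x / C) *: (s - x))).
Proof.
move=> Sx lmo_s r_gt0 c_ge0 r_le.
have cG_ge0 : 0 <= (1 - 2 * delta / r) * fw_gap S (gradf x) x.
  by rewrite mulr_ge0 // (fw_gap_ge0 Scpt _ Sx).
apply: (@le_trans _ _ (gap_lb x ^+ 2)).
  by rewrite lerXn2r ?nnegrE ?gap_lb_ge0 // gap_lb_ge.
have := fw_descent Sx lmo_s.
rewrite -ler_pdivrMl ?mulr_gt0 // mulrC; lra.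
Qed.

Lemma fw_iterates_in (xs ss : nat -> 'rV[R]_d) : S (xs 0%N) ->
  (forall k, lmo (xs k) (ss k)) ->
  (forall k, xs k.+1 = xs k + (gap_lb (xs k) / C) *: (ss k - xs k)) ->
  forall k, S (xs k).
Proof.
move=> Sx0 lmo_ss xs_next; elim=> [//|k IH].
by rewrite xs_next; exact: fw_step_in.
Qed.

End FrankWolfeStep.
Arguments fw_iterates_in {R d S gradf g L C delta}.
Arguments fw_step_decrease {R d S f gradf g L C delta}.

Theorem corollary1 (R : realType) (d : nat) (S : set 'rV[R]_d)
  (f : 'rV[R]_d -> R) (gradf g : 'rV[R]_d -> 'rV[R]_d)
  (L C delta r : R) (xs ss : nat -> 'rV[R]_d) :
  S !=set0 -> compact S -> convexS S ->
  (forall x, S x -> differentiable f x /\ forall v, 'd f x v = dotv (gradf x) v) ->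
  0 <= L ->
  (forall x y, S x -> S y -> enorm (gradf x - gradf y) <= L * enorm (x - y)) ->
  L * diam S ^+ 2 <= C ->
  sup [set enorm (gradf x) | x in S] * diam S <= C ->
  0 < C ->
  0 <= delta ->
  (forall x s, S x -> S s ->
     `| dotv (gradf x - g x) (s - x) | <= delta * enorm (gradf x)) ->
  S (xs 0%N) ->
  (forall k, S (ss k) /\
     forall s, S s -> dotv (g (xs k)) (ss k - xs k) <= dotv (g (xs k)) (s - xs k)) ->
  (forall k, xs k.+1 = xs k +
     (Num.max (fw_gap S (g (xs k)) (xs k) - delta * enorm (gradf (xs k))) 0 / C)
       *: (ss k - xs k)) ->
  0 < r ->
  (forall k, r <= set_dist (xs k) (boundary S)) ->
  (forall k, r * enorm (gradf (xs k)) <= fw_gap S (gradf (xs k)) (xs k)) /\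
  (delta < r / 2 ->
     (forall K : nat,
        min_upto (fun k => fw_gap S (gradf (xs k)) (xs k)) K <=
          (1 - 2 * delta / r)^-1 *
          Num.sqrt (2 * C * (f (xs 0%N) - inf [set f x | x in S]) / K.+1%:R)) /\
     (exists M : R, forall K : nat, (0 < K)%N ->
        min_upto (fun k => fw_gap S (gradf (xs k)) (xs k)) K <= M / Num.sqrt K%:R) /\
     limn_einf (fun k => (fw_gap S (gradf (xs k)) (xs k))%:E) = 0%E).
Proof.
move=> S_neq0 Scpt Scvx df L_ge0 gradf_lip LC GC C_gt0 delta_ge0 g_err Sx0 lmo_ss
  xs_next r_gt0 r_le.
have Sxs := fw_iterates_in S_neq0 Scpt Scvx L_ge0 gradf_lip GC C_gt0 g_err _ _
  Sx0 lmo_ss xs_next.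
have step_decrease := fw_step_decrease S_neq0 Scpt Scvx df L_ge0 gradf_lip LC GC
  C_gt0 delta_ge0 g_err.
pose G k := fw_gap S (gradf (xs k)) (xs k).
have G_ge0 k : 0 <= G k := fw_gap_ge0 Scpt _ (Sxs k).
have G_ge k : r * enorm (gradf (xs k)) <= G k.
  exact: (fw_gap_ge_dist_boundary Scpt _ (Sxs k) (r_le k)).
split => // delta_lt; set c := 1 - 2 * delta / r.
have c_gt0 : 0 < c by rewrite subr_gt0 ltr_pdivrMr // mul1r; lra.
set fstar := inf [set f x | x in S].
have fstar_le k : fstar <= f (xs k).
  apply: continuous_compact_inf_le (Sxs k) => //.
  by apply: differentiable_within_continuous => x /df[].
pose phi k := 2 * C * (f (xs k) - fstar).
have phi_ge0 k : 0 <= phi k by rewrite mulr_ge0 ?subr_ge0 // mulr_ge0 // ltW.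
have decr k : (c * G k) ^+ 2 <= phi k - phi k.+1.
  have -> : phi k - phi k.+1 = 2 * C * (f (xs k) - f (xs k.+1)).
    by rewrite /phi; ring.
  by rewrite [xs k.+1]xs_next; apply: step_decrease => //; exact: ltW.
have rate K := min_upto_rate K c_gt0 G_ge0 phi_ge0 decr.
split => //; split; last exact: limn_einf_telescope c_gt0 G_ge0 phi_ge0 decr.
exists (c^-1 * Num.sqrt (phi 0%N)) => K K_gt0; apply: le_trans (rate K) _.
by rewrite -(mulrA c^-1) ler_wpM2l ?invr_ge0 ?(ltW c_gt0) // sqrt_div_succ_le.
Qed.
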